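(* Let $Q=\langle b\rangle\ltimes_{(g,\gamma)}X$ and let $S$ be a nonempty subset of $Q$. Then $S$ is a normal subloop of $Q$ with $S\cap(1\times X)=S\cap(C\times 0)=\{(1,0)\}$ if and only if there exist $k\in\mathbb Z$ and $z\in X$ such that $S=\langle(b^k,z)\rangle=\{(b^{ki},iz):i\in\mathbb Z\}$, the orders satisfy $|b^k|=|z|$, and $(b^k,z)\in Z(Q)$.
   Context: Let $(X,+)$ be an abelian group and $(g,\gamma)$ a construction pair on it: $g$ a permutation of $X$, $\gamma:X\times X\to X$ symmetric, alternating, biadditive, with (C1) $g^{-1}(g(x)+g(y))=x+y+\gamma(x,y)+g^{-1}(\gamma(x,y))+g^{-2}(\gamma(x,y))$, (C2) $\gamma(\gamma(x,y),z)=0$, (C3) $g^{-1}(\gamma(x,y))=\gamma(g(x),y)$ for all $x,y,z$. Let $\mathrm{Rad}(\gamma)=\{x:\gamma(x,y)=0\ \forall y\}$ and $r(g,\gamma)$ the least positive $r$ with $\sum_{0\le k<r}g^k(x)\in\mathrm{Rad}(\gamma)$ for all $x$ ($\infty$ if none). $I(i,j)$ is $\emptyset$ if $i=j$, $\{i,\dots,j-1\}$ if $i<j$, $\{j,\dots,i-1\}$ if $j<i$. For a cyclic group $C=\langle b\rangle$ such that (if finite) $|g|$ and $r(g,\gamma)$ divide $|C|$, $C\ltimes_{(g,\gamma)}X$ is the Moufang loop on $C\times X$ with multiplication $(b^i,x)(b^j,y)=(b^{i+j},g^{-j}(x)+y+\sum_{k\in I(i+j,-j)}g^{-k}(\gamma(x,y)))$,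 neutral element $(1,0)$. $Z(Q)$ is the center: elements of the nucleus that commute with all elements. *)

From HB Require Import structures.
From mathcomp Require Import all_boot all_order all_algebra.
Set Implicit Arguments. Unset Strict Implicit. Unset Printing Implicit Defensive.
Import Order.TTheory GRing.Theory Num.Theory.
Local Open Scope ring_scope.

Section Defs.
Variable X : zmodType.

(* order of an element described by its annihilator predicate on positive
   naturals: o = 0 encodes infinite order. *)
Definition is_order (P : nat -> Prop) (o : nat) : Prop :=
  ((o = 0%N) /\ forall m : nat, (0 < m)%N -> ~ P m) \/
  ((0 < o)%N /\ P o /\ forall m : nat, (0 < m)%N -> (m < o)%N -> ~ P m).

Definition gz (g gi : X -> X) (m : int) : X -> X :=
  match m with
  | Posz k => iter k g
  | Negz k => iter k.+1 gi
  end.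

Definition construction_pair (g gi : X -> X) (gam : X -> X -> X) : Prop :=
  [/\ cancel g gi, cancel gi g,
      (forall x y, gam x y = gam y x),
      (forall x, gam x x = 0) &
      (forall x y z, gam (x + y) z = gam x z + gam y z)] /\
  [/\ (forall x y z, gam x (y + z) = gam x y + gam x z),
      (forall x y, gi (g x + g y) =
                   x + y + gam x y + gi (gam x y) + gi (gi (gam x y))),
      (forall x y z, gam (gam x y) z = 0)
    &
      (forall x y, gi (gam x y) = gam (g x) y)].

Definition inRad (gam : X -> X -> X) (x : X) : Prop := forall y, gam x y = 0.

(* C = <b> cyclic of order n (n = 0 : infinite cyclic); if finite, |g| and
   r(g,gamma) divide n. *)
Definition cyclic_ok (g : X -> X) (gam : X -> X -> X) (n : nat) : Prop :=
  (0 < n)%N ->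
  (exists o, is_order (fun m => forall x, iter m g x = x) o /\ (o %| n)%N) /\
  (exists o, is_order (fun m => forall x, inRad gam (\sum_(k < m) iter k g x)) o
             /\ (o %| n)%N).

Definition Isum (a c : int) (f : int -> X) : X :=
  \sum_(m < `|c - a|%N) f (Num.min a c + (m : nat)%:Z).

(* Elements of C x X are represented as pairs (i, x) : int * X, where b^i is
   represented by its canonical representative i %% n (i itself if n = 0). *)
Definition inQ (n : nat) (p : int * X) : Prop := p.1 = (p.1 %% n%:Z)%Z.

Definition mulQ (g gi : X -> X) (gam : X -> X -> X) (n : nat)
  (p q : int * X) : int * X :=
  (((p.1 + q.1) %% n%:Z)%Z,
   gz g gi (- q.1) p.2 + q.2 +
   Isum (p.1 + q.1) (- q.1) (fun k => gz g gi (- k) (gam p.2 q.2))).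

Section Loop.
Variables (g gi : X -> X) (gam : X -> X -> X) (n : nat).
Local Notation inQ := (inQ n).
Local Notation "a * b" := (mulQ g gi gam n a b).

Definition subloop (S : int * X -> Prop) : Prop :=
  [/\ (forall p, S p -> inQ p),
      (exists p, S p),
      (forall a b, S a -> S b -> S (a * b)),
      (forall a b z, S a -> S b -> inQ z -> a * z = b -> S z)
    & (forall a b z, S a -> S b -> inQ z -> z * a = b -> S z)].

Definition normal_subloop (S : int * X -> Prop) : Prop :=
  subloop S /\
  forall x y, inQ x -> inQ y ->
    [/\ (forall w, (exists s, S s /\ w = x * s) <-> (exists s, S s /\ w = s * x)),
        (forall w, (exists s, S s /\ w = (x * s) * y) <->
                   (exists s, S s /\ w = x * (s * y)))
      & (forall w, (exists s, S s /\ w = x * (y * s)) <->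
                   (exists s, S s /\ w = (x * y) * s))].

Definition gen_subloop (a : int * X) : int * X -> Prop :=
  fun p => forall T, subloop T -> T a -> T p.

Definition in_nucleus (a : int * X) : Prop :=
  inQ a /\ forall x y, inQ x -> inQ y ->
    [/\ (a * x) * y = a * (x * y), (x * a) * y = x * (a * y)
      & (x * y) * a = x * (y * a)].

Definition in_center (a : int * X) : Prop :=
  in_nucleus a /\ forall x, inQ x -> a * x = x * a.
End Loop.

Definition ordC (n : nat) (k : int) : nat -> Prop :=
  fun m => (n%:Z %| m%:Z * k)%Z.
Definition ordX (z : X) : nat -> Prop := fun m => z *+ m = 0.

End Defs.

(* Write (i, x) for (b^i, x).  The proof rests on three observations.
   - Centrality.  If S is a normal subloop whose elements are determined by
     their first coordinate (this is what S meets 1 x X trivially gives),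
     then each of the equalities xS = Sx, (xS)y = x(Sy), x(yS) = (xy)S is
     witnessed by the same element of S on both sides, because first
     coordinates just add up mod n.  Hence S lies in the centre Z(Q).
   - Powers.  A central element (k, z) with k <> 0 has g z = z (it commutes
     with (1, 0)); for such z the gamma-correction term of the product
     vanishes on powers, so (k, z)^i = (ki mod n, iz) and the powers of a
     central element form a subloop of central elements.
   - Euclid.  In the forward direction, take s in S with least positive
     first coordinate; dividing any p in S by a suitable power of s leaves
     a first coordinate in [0, s.1), hence 0, hence p is a power of s.
   The order conditions translate "S meets C x 0 and 1 x X trivially" into
   "n | ki  <->  iz = 0", i.e. |b^k| = |z|. *)

From mathcomp Require Import all_boot all_order all_algebra.
From mathcomp Require Import zify.
From Stdlib Require Import Classical.
Import Order.TTheory GRing.Theory Num.Theory.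
Set Implicit Arguments. Unset Strict Implicit. Unset Printing Implicit Defensive.
Local Open Scope ring_scope.

Lemma is_order_dvd (P : nat -> Prop) o : is_order P o ->
  (forall a b, P a -> P b -> P (a %% b)%N) -> (forall a q, P a -> P (a * q)%N) ->
  forall a, (0 < a)%N -> (P a <-> (0 < o)%N /\ (o %| a)%N).
Proof.
case=> [[-> noP]|[o_gt0 [Po o_min]]] Pmod Pmul a a_gt0.
  by split=> [Pa|[]//]; case: (noP a a_gt0).
split=> [Pa|[_ /dvdnP [q ->]]]; last by rewrite mulnC; apply: Pmul.
split=> //; have := Pmod _ _ Pa Po.
case: (posnP (a %% o)%N) => [r0 _|r_gt0 Pr]; first by rewrite /dvdn r0.
by case: (o_min _ r_gt0 (ltn_pmod a o_gt0)).
Qed.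

Lemma least_positive_witness (P : nat -> Prop) a : (0 < a)%N -> P a ->
  exists o, [/\ (0 < o)%N, P o & forall m, (0 < m)%N -> (m < o)%N -> ~ P m].
Proof.
elim: a {-2}a (leqnn a) => [|N IH] b b_le b_gt0 Pb; first by lia.
case: (classic (exists m, [/\ (0 < m)%N, (m < b)%N & P m])).
  by case=> c [c_gt0 c_lt Pc]; apply: (IH c) => //; lia.
by move=> noc; exists b; split=> // c c_gt0 c_lt Pc; apply: noc; exists c.
Qed.

Lemma is_order_common (P P' : nat -> Prop) :
  (forall a, (0 < a)%N -> (P a <-> P' a)) -> exists o, is_order P o /\ is_order P' o.
Proof.
move=> PP'; case: (classic (exists a, (0 < a)%N /\ P a)) => [[a [a_gt0 Pa]]|noP].
  have [o [o_gt0 Po o_min]] := least_positive_witness a_gt0 Pa.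
  exists o; split; right; do 2!split=> //; first by rewrite -PP'.
  by move=> c c_gt0 c_lt; rewrite -PP' //; apply: o_min.
exists 0%N; split; left; split=> // c c_gt0 Pc; apply: noP; exists c.
  by [].
by rewrite PP'.
Qed.

Lemma ordC_mod n k a b : ordC n k a -> ordC n k b -> ordC n k (a %% b)%N.
Proof.
rewrite /ordC {1}(divn_eq a b) PoszD PoszM mulrDl => ha hb.
have -> : (a %% b)%N%:Z * k = ((a %/ b)%N%:Z * b%:Z * k + (a %% b)%N%:Z * k)
   - (a %/ b)%N%:Z * (b%:Z * k) by rewrite mulrA [X in X - _]addrC addrK.
by rewrite rpredB // dvdz_mull.
Qed.

Lemma ordC_mul n k a q : ordC n k a -> ordC n k (a * q)%N.
Proof. by rewrite /ordC PoszM => h; rewrite mulrAC mulrC dvdz_mull. Qed.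

Lemma ordX_mod (X : zmodType) (z : X) a b : ordX z a -> ordX z b -> ordX z (a %% b)%N.
Proof.
rewrite /ordX {1}(divn_eq a b) mulrnDr (mulnC (a %/ b)%N) mulrnA => ha hb.
by move: ha; rewrite hb mul0rn add0r.
Qed.

Lemma ordX_mul (X : zmodType) (z : X) a q : ordX z a -> ordX z (a * q)%N.
Proof. by rewrite /ordX => h; rewrite mulrnA h mul0rn. Qed.

Lemma same_order_kernel (X : zmodType) n k (z : X) :
  (exists o, is_order (ordC n k) o /\ is_order (ordX z) o) ->
  forall i : int, (n%:Z %| k * i)%Z <-> z *~ i = 0.
Proof.
case=> o [oC oX].
have nat_case (a : nat) : (n%:Z %| k * a%:Z)%Z <-> z *~ a%:Z = 0.
  case: a => [|a]; first by rewrite mulr0 mulr0z dvdz0.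
  rewrite -pmulrn mulrC.
  have := is_order_dvd oC (@ordC_mod n k) (@ordC_mul n k) (ltn0Sn a).
  have := is_order_dvd oX (@ordX_mod _ z) (@ordX_mul _ z) (ltn0Sn a).
  by rewrite /ordC /ordX => -> ->.
case=> a; first exact: nat_case.
rewrite NegzE mulrN mulrNz rpredN; split=> [/nat_case ->|]; first by rewrite oppr0.
by move/eqP; rewrite oppr_eq0 => /eqP /nat_case.
Qed.

Section ConstructionPair.
Variables (X : zmodType) (g gi : X -> X) (gam : X -> X -> X) (n : nat).
Hypothesis cp : construction_pair g gi gam.

Lemma gK : cancel g gi. Proof. by case: cp => [[]]. Qed.
Lemma giK : cancel gi g. Proof. by case: cp => [[]]. Qed.
Lemma gamC x y : gam x y = gam y x. Proof. by case: cp => [[]]. Qed.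
Lemma gamxx x : gam x x = 0. Proof. by case: cp => [[]]. Qed.
Lemma gamDl x y z : gam (x + y) z = gam x z + gam y z.
Proof. by case: cp => [[]]. Qed.
Lemma gamDr x y z : gam x (y + z) = gam x y + gam x z.
Proof. by case: cp => [_ []]. Qed.
Lemma C1 x y : gi (g x + g y) = x + y + gam x y + gi (gam x y) + gi (gi (gam x y)).
Proof. by case: cp => [_ []]. Qed.
Lemma C2 x y z : gam (gam x y) z = 0. Proof. by case: cp => [_ []]. Qed.
Lemma C3 x y : gi (gam x y) = gam (g x) y. Proof. by case: cp => [_ []]. Qed.

Lemma gam0l y : gam 0 y = 0.
Proof. by apply: (addrI (gam 0 y)); rewrite addr0 -gamDl addr0. Qed.
Lemma gam0r y : gam y 0 = 0. Proof. by rewrite gamC gam0l. Qed.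
Lemma gamNl x y : gam (- x) y = - gam x y.
Proof. by apply/eqP; rewrite -addr_eq0 -gamDl addNr gam0l. Qed.
Lemma gamNr x y : gam y (- x) = - gam y x.
Proof. by rewrite gamC gamNl gamC. Qed.
Lemma gamBr c x y : gam c (x - y) = gam c x - gam c y.
Proof. by rewrite gamDr gamNr. Qed.
Lemma gamMnl x y m : gam (x *+ m) y = gam x y *+ m.
Proof. by elim: m => [|m IH]; rewrite ?gam0l // !mulrS gamDl IH. Qed.
Lemma gamMzl x y i : gam (x *~ i) y = gam x y *~ i.
Proof. by case: i => m; rewrite ?NegzE ?mulrNz ?gamNl gamMnl. Qed.
Lemma gamMzr x y i : gam y (x *~ i) = gam y x *~ i.
Proof. by rewrite gamC gamMzl gamC. Qed.
Lemma gam_suml (I : Type) (r : seq I) (F : I -> X) y :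
  gam (\sum_(i <- r) F i) y = \sum_(i <- r) gam (F i) y.
Proof.
elim: r => [|a r IH]; first by rewrite !big_nil gam0l.
by rewrite !big_cons gamDl IH.
Qed.

Lemma gi0 : gi 0 = 0. Proof. by have := C3 0 0; rewrite !gam0r. Qed.
Lemma g0 : g 0 = 0. Proof. by rewrite -{1}gi0 giK. Qed.

Lemma g_gam x y : g (gam x y) = gam (gi x) y.
Proof. by rewrite -{1}(giK x) -C3 giK. Qed.

Lemma gz_neg (m : nat) : gz g gi (- (m%:Z)) = iter m gi.
Proof. by case: m => [|m]; rewrite ?oppr0 // -NegzE. Qed.

Lemma gz_gam j x y : gz g gi j (gam x y) = gam (gz g gi (- j) x) y.
Proof.
case: j => m.
  by rewrite gz_neg /=; elim: m => [|m IH] //=; rewrite IH g_gam.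
rewrite NegzE opprK /=; elim: m => [|m IH] /=; first by rewrite C3.
by rewrite IH C3.
Qed.

Lemma gz0 j : gz g gi j 0 = 0.
Proof. by case: j => m /=; elim: m => [|m IH] //=; rewrite ?IH ?g0 ?gi0. Qed.

Lemma gz_fix x j : g x = x -> gz g gi j x = x.
Proof.
move=> gx; have gix : gi x = x by rewrite -{1}gx gK.
by case: j => m /=; elim: m => [|m IH] //=; rewrite ?IH.
Qed.

Lemma gD_orth x y : gam x y = 0 -> g (x + y) = g x + g y.
Proof. by move=> xy0; have := C1 x y; rewrite xy0 gi0 gi0 !addr0 => <-; rewrite giK. Qed.

Lemma g_fixMz z i : g z = z -> g (z *~ i) = z *~ i.
Proof.
move=> gz_z.
have fixMn (m : nat) : g (z *+ m) = z *+ m.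
  elim: m => [|m IH]; first by rewrite g0.
  by rewrite mulrS gD_orth ?IH ?gz_z // gamC gamMnl gamxx mul0rn.
case: i => m; rewrite ?NegzE ?mulrNz ?fixMn //.
have := gD_orth (x := z *+ m.+1) (y := - (z *+ m.+1)).
rewrite subrr g0 gamNr gamMnl gamC gamMnl gamxx !mul0rn oppr0 => /(_ erefl) /esym.
by rewrite fixMn => e; apply/eqP; rewrite -addr_eq0 addrC e.
Qed.

Lemma Isum0 a c (f : int -> X) : (forall k, f k = 0) -> Isum a c f = 0.
Proof. by move=> f0; rewrite /Isum big1. Qed.

Lemma Isum_gam a c x y :
  Isum a c (fun k => gz g gi (- k) (gam x y)) = gam (Isum a c (fun k => gz g gi k x)) y.
Proof. by rewrite /Isum gam_suml; apply: eq_bigr => i _; rewrite gz_gam opprK. Qed.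

Local Notation mul := (mulQ g gi gam n).
Local Notation Q := (inQ n).
Local Notation Cen := (in_center g gi gam n).

Lemma inQ_mul a b : Q (mul a b).
Proof. by rewrite /inQ /= modz_mod. Qed.

Lemma inQ0 (y : X) : Q (0, y).
Proof. by rewrite /inQ /= mod0z. Qed.

Lemma mul1q a : Q a -> mul (0, 0) a = a.
Proof.
case: a => a1 a2; rewrite /inQ /mulQ /= => a1_red.
rewrite add0r -a1_red Isum0; last by move=> k; rewrite gam0l gz0.
by rewrite gz0 add0r addr0.
Qed.

Lemma mulq1 a : Q a -> mul a (0, 0) = a.
Proof.
case: a => a1 a2; rewrite /inQ /mulQ /= => a1_red.
rewrite addr0 oppr0 -a1_red Isum0; last by move=> k; rewrite gam0r gz0.
by rewrite !addr0.
Qed.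

Lemma addz_mod_cancel (x a b : int) : a = (a %% n)%Z -> b = (b %% n)%Z ->
  ((x + a) %% n)%Z = ((x + b) %% n)%Z -> a = b.
Proof.
move=> a_red b_red e; rewrite a_red b_red.
have : ((((x + a) %% n)%Z - x) %% n)%Z = ((((x + b) %% n)%Z - x) %% n)%Z by rewrite e.
by rewrite !modzDml !(addrC x) !addrK.
Qed.

(* The elements (ki mod n, iz), which are the powers of (k, z) when g z = z. *)
Definition powQ (k : int) (z : X) (i : int) : int * X := (((k * i) %% n)%Z, z *~ i).

Lemma powQ_inQ k z i : Q (powQ k z i).
Proof. by rewrite /inQ /= modz_mod. Qed.

Lemma powQ0 k z : powQ k z 0 = (0, 0).
Proof. by rewrite /powQ mulr0 mod0z mulr0z. Qed.

Lemma powQ1 k z : powQ k z 1 = ((k %% n)%Z, z).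
Proof. by rewrite /powQ mulr1 mulr1z. Qed.

(* For g-fixed z the correction term vanishes (gamma(iz, jz) = 0), so the
   powQ form a cyclic group under the loop product. *)
Lemma powQ_mul k z i j : g z = z -> mul (powQ k z i) (powQ k z j) = powQ k z (i + j).
Proof.
move=> gz_z; rewrite /mulQ /powQ /=; congr (_, _).
  by rewrite modzDml modzDmr mulrDr.
rewrite Isum0; last by move=> q; rewrite gamMzl gamMzr gamxx !mul0rz gz0.
by rewrite addr0 gz_fix ?g_fixMz // mulrzDr.
Qed.

Local Hint Resolve inQ_mul powQ_inQ : core.

Lemma cenQ a : Cen a -> Q a. Proof. by case=> [[]]. Qed.
Lemma cen1 a : Cen a -> forall x y, Q x -> Q y -> mul (mul a x) y = mul a (mul x y).
Proof. by case=> [[_ h] _] x y Qx Qy; case: (h x y Qx Qy). Qed.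
Lemma cen2 a : Cen a -> forall x y, Q x -> Q y -> mul (mul x a) y = mul x (mul a y).
Proof. by case=> [[_ h] _] x y Qx Qy; case: (h x y Qx Qy). Qed.
Lemma cen3 a : Cen a -> forall x y, Q x -> Q y -> mul (mul x y) a = mul x (mul y a).
Proof. by case=> [[_ h] _] x y Qx Qy; case: (h x y Qx Qy). Qed.
Lemma cenC a : Cen a -> forall x, Q x -> mul a x = mul x a.
Proof. by case. Qed.

Lemma cenP u : Q u -> (forall x, Q x -> mul u x = mul x u) ->
  (forall x y, Q x -> Q y -> mul (mul u x) y = mul u (mul x y)) ->
  (forall x y, Q x -> Q y -> mul (mul x y) u = mul x (mul y u)) -> Cen u.
Proof.
move=> Qu uC u1 u3; split=> //; split=> // x y Qx Qy; split; [exact: u1| |exact: u3].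
by rewrite -uC // u1 // (uC y) // -u3 // uC.
Qed.

Lemma cen0 : Cen (0, 0).
Proof.
apply: cenP; first exact: inQ0.
- by move=> x Qx; rewrite mul1q // mulq1.
- by move=> x y Qx Qy; rewrite !mul1q.
- by move=> x y Qx Qy; rewrite !mulq1.
Qed.

Lemma cen_lcancel a a' : Cen a -> Q a' -> mul a' a = (0, 0) ->
  forall u v, Q u -> Q v -> mul a u = mul a v -> u = v.
Proof.
move=> Ca Qa' a'a u v Qu Qv e.
by rewrite -(mul1q Qu) -(mul1q Qv) -a'a !(cen2 Ca) // e.
Qed.

Lemma cen_rcancel a a' : Cen a -> Q a' -> mul a a' = (0, 0) ->
  forall u v, Q u -> Q v -> mul u a = mul v a -> u = v.
Proof.
move=> Ca Qa' aa' u v Qu Qv e.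
by rewrite -(mulq1 Qu) -(mulq1 Qv) -aa' -!(cen2 Ca) // e.
Qed.

Lemma cen_mul s t : Cen s -> Cen t -> Cen (mul s t).
Proof.
move=> Cs Ct; have Qs := cenQ Cs; have Qt := cenQ Ct.
apply: cenP => // [x Qx|x y Qx Qy|x y Qx Qy].
- by rewrite (cen1 Cs) // (cenC Ct) // -(cen1 Cs) // (cenC Cs (x := x)) // (cen2 Cs).
- by rewrite (cen1 Cs) // (cen1 Cs (x := mul t x)) // (cen1 Ct) // (cen1 Cs (x := t)).
- rewrite -(cenC Ct (x := s)) // -(cen3 Cs) // (cen3 Ct) //.
  by rewrite (cen3 Cs) // (cen3 Cs).
Qed.

Lemma cen_div s s' t : Cen s -> Q s' -> mul s' s = (0, 0) -> mul s s' = (0, 0) ->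
  Q t -> Cen (mul s t) -> mul t s = mul s t -> Cen t.
Proof.
move=> Cs Qs' s's ss' Qt Cst ts_st; have Qs := cenQ Cs.
have lcan := cen_lcancel Cs Qs' s's; have rcan := cen_rcancel Cs Qs' ss'.
apply: cenP => // [x Qx|x y Qx Qy|x y Qx Qy].
- apply: lcan => //.
  by rewrite -(cen1 Cs) // (cenC Cst) // -ts_st -(cen3 Cs) // (cenC Cs).
- apply: lcan => //.
  by rewrite -(cen1 Cs) // -(cen1 Cs) // (cen1 Cst) // (cen1 Cs).
- apply: rcan => //.
  by rewrite (cen3 Cs) // ts_st (cen3 Cst) // -ts_st -(cen3 Cs) // -(cen3 Cs).
Qed.

Lemma powQ_cen k z : g z = z -> Cen (powQ k z 1) -> forall i, Cen (powQ k z i).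
Proof.
move=> gz_z C1.
have inv_l : mul (powQ k z (-1)) (powQ k z 1) = (0, 0).
  by rewrite powQ_mul // addNr powQ0.
have inv_r : mul (powQ k z 1) (powQ k z (-1)) = (0, 0).
  by rewrite powQ_mul // addrN powQ0.
have nat_case (q : nat) : Cen (powQ k z q) /\ Cen (powQ k z (- q%:Z)).
  elim: q => [|q [IHp IHn]]; first by rewrite oppr0 powQ0; split; apply: cen0.
  split; first by rewrite -addn1 PoszD addrC -powQ_mul //; apply: cen_mul.
  apply: (cen_div C1 (powQ_inQ _ _ _) inv_l inv_r (powQ_inQ _ _ _)).
    by rewrite powQ_mul // -addn1 PoszD opprD addrA addrAC subrr add0r.
  by rewrite !powQ_mul // addrC.
by case=> q; [exact: (nat_case q).1 | rewrite NegzE; exact: (nat_case q.+1).2].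
Qed.

Lemma powQ_subloop T k z : subloop g gi gam n T -> g z = z -> T (powQ k z 1) ->
  forall i, T (powQ k z i).
Proof.
case=> _ _ Tmul Tldiv _ gz_z T1.
have T0 : T (powQ k z 0).
  by apply: (Tldiv _ _ _ T1 T1 (powQ_inQ _ _ _)); rewrite powQ_mul // addr0.
have nat_case (q : nat) : T (powQ k z q) /\ T (powQ k z (- q%:Z)).
  elim: q => [|q [IHp IHn]]; first by rewrite oppr0.
  split; first by rewrite -addn1 PoszD addrC -powQ_mul //; apply: Tmul.
  apply: (Tldiv _ _ _ T1 IHn (powQ_inQ _ _ _)).
  by rewrite powQ_mul // -addn1 PoszD opprD addrA addrAC subrr add0r.
by case=> q; [exact: (nat_case q).1 | rewrite NegzE; exact: (nat_case q.+1).2].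
Qed.

(* If a subloop meets 1 x X only in (0, 0), its elements are determined by
   their first coordinate: p = q u with u in 1 x X, and u lies in the
   subloop as a left quotient. *)
Lemma subloop_first_inj T : subloop g gi gam n T ->
  (forall p, T p -> p.1 = 0 -> p = (0, 0)) ->
  forall p q, T p -> T q -> p.1 = q.1 -> p = q.
Proof.
case=> TQ _ _ Tldiv _ T0 [p1 p2] [q1 q2] Tp Tq /= e.
set c := Isum (q1 + 0) (- 0) (fun k => gz g gi k q2).
set d := p2 - q2.
have qu : mul (q1, q2) (0, d - gam c d) = (p1, p2).
  have gam_cc : gam c (gam c d) = 0 by rewrite gamC C2.
  rewrite /mulQ /= Isum_gam -/c [gam c (_ - gam c d)]gamBr gam_cc subr0.
  have q1_red := TQ _ Tq; rewrite /inQ /= in q1_red.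
  rewrite subr0 -q1_red e; congr (_, _).
  by rewrite addrA subrK /d addrC subrK.
have [u0] := T0 _ (Tldiv _ _ _ Tq Tp (inQ0 _) qu) erefl.
by move: qu; rewrite u0 (mulq1 (TQ _ Tq)) => ->.
Qed.

(* A central element lies in 1 x X or has g-fixed second coordinate:
   it commutes with (1, 0), and (1, 0)(k, z) and (k, z)(1, 0) differ by g. *)
Lemma central_fix a : Cen a -> a.1 = 0 \/ g a.2 = a.2.
Proof.
case: a => a1 a2 [[Qa _] aC]; rewrite /inQ /= in Qa *.
have [n1|n1] : n = 1%N \/ n <> 1%N by lia.
  by left; rewrite Qa n1 modz1.
right.
have Qb : Q (1, 0 : X).
  rewrite /inQ /=; have [->|n_gt1] : n = 0%N \/ (1 < n)%N by lia.
    by rewrite modz0.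
  by rewrite modz_small //; apply/andP; split => //; rewrite ltz_nat.
have := aC _ Qb; rewrite /mulQ /= => -[_].
rewrite !Isum0; try by move=> k; rewrite ?gam0r ?gam0l gz0.
by rewrite gz0 !addr0 add0r /= => e; rewrite -{1}e giK.
Qed.

(* Main centrality lemma: a normal subloop whose elements are determined by
   their first coordinates is central, since in each normality equation the
   two witnesses in S have the same first coordinate. *)
Lemma normal_central S : normal_subloop g gi gam n S ->
  (forall p q, S p -> S q -> p.1 = q.1 -> p = q) ->
  forall s, S s -> Cen s.
Proof.
move=> [[SQ _ _ _ _] normS] Sinj s Ss; have Qs := SQ _ Ss.
have sC : forall x, Q x -> mul s x = mul x s.
  move=> x Qx; have [xS _ _] := normS x x Qx Qx.
  have [s' [Ss' e]] := (xS (mul x s)).1 (ex_intro _ s (conj Ss erefl)).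
  suff s's : s' = s by rewrite e s's.
  apply: Sinj => //; apply: (addz_mod_cancel (x := x.1)) (SQ _ Ss') Qs _.
  by have := congr1 fst e; rewrite /= (addrC s'.1) => ->.
have s2 : forall x y, Q x -> Q y -> mul (mul x s) y = mul x (mul s y).
  move=> x y Qx Qy; have [_ xSy _] := normS x y Qx Qy.
  have [s' [Ss' e]] := (xSy (mul (mul x s) y)).1 (ex_intro _ s (conj Ss erefl)).
  suff s's : s' = s by rewrite e s's.
  apply: Sinj => //; apply: (addz_mod_cancel (x := x.1 + y.1)) (SQ _ Ss') Qs _.
  have := congr1 fst e; rewrite /= modzDml modzDmr.
  by rewrite (addrAC x.1 s.1) (addrA x.1 s'.1) (addrAC x.1 s'.1) => ->.
have s3 : forall x y, Q x -> Q y -> mul x (mul y s) = mul (mul x y) s.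
  move=> x y Qx Qy; have [_ _ xyS] := normS x y Qx Qy.
  have [s' [Ss' e]] := (xyS (mul x (mul y s))).1 (ex_intro _ s (conj Ss erefl)).
  suff s's : s' = s by rewrite e s's.
  apply: Sinj => //; apply: (addz_mod_cancel (x := x.1 + y.1)) (SQ _ Ss') Qs _.
  by have := congr1 fst e; rewrite /= modzDml modzDmr addrA => ->.
apply: cenP => // [x y Qx Qy|x y Qx Qy]; last by rewrite s3.
by rewrite (sC x) // s2 // (sC y) // s3 // (sC (mul x y)).
Qed.

Lemma central_subloop_normal T : subloop g gi gam n T ->
  (forall s, T s -> Cen s) -> normal_subloop g gi gam n T.
Proof.
move=> Tsub TC; split=> // x y Qx Qy.
split=> w; split; case=> s [Ts ->]; exists s; split=> //.
- by rewrite (cenC (TC _ Ts)).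
- by rewrite (cenC (TC _ Ts)).
- by rewrite (cen2 (TC _ Ts)).
- by rewrite (cen2 (TC _ Ts)).
- by rewrite (cen3 (TC _ Ts)).
- by rewrite (cen3 (TC _ Ts)).
Qed.

Lemma powQ_set_subloop T k z : g z = z -> Cen (powQ k z 1) ->
  (forall p, T p <-> exists i, p = powQ k z i) -> subloop g gi gam n T.
Proof.
move=> gz_z C1 T_pow; have Cpow := powQ_cen gz_z C1.
split.
- by move=> p /T_pow [i ->].
- by exists (powQ k z 0); apply/T_pow; exists 0.
- by move=> a b /T_pow [i ->] /T_pow [j ->]; apply/T_pow; exists (i + j); rewrite powQ_mul.
- move=> a b w /T_pow [i ->] /T_pow [j ->] Qw e; apply/T_pow; exists (j - i).
  apply: (cen_lcancel (Cpow i) (powQ_inQ k z (- i))) => //.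
    by rewrite powQ_mul // addNr powQ0.
  by rewrite e powQ_mul // addrC subrK.
- move=> a b w /T_pow [i ->] /T_pow [j ->] Qw e; apply/T_pow; exists (j - i).
  apply: (cen_rcancel (Cpow i) (powQ_inQ k z (- i))) => //.
    by rewrite powQ_mul // addrN powQ0.
  by rewrite e powQ_mul // subrK.
Qed.

Definition normal_meeting_trivially (S : int * X -> Prop) : Prop :=
  normal_subloop g gi gam n S /\
  (forall p, (S p /\ p.1 = 0) <-> p = (0, 0)) /\
  (forall p, (S p /\ p.2 = 0) <-> p = (0, 0)).

Definition central_cyclic (S : int * X -> Prop) : Prop :=
  exists (k : int) (z : X),
    (forall p, S p <-> gen_subloop g gi gam n ((k %% n%:Z)%Z, z) p) /\
    (forall p, S p <-> exists i : int, p = (((k * i) %% n%:Z)%Z, z *~ i)) /\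
    (exists o : nat, is_order (ordC n k) o /\ is_order (ordX z) o) /\
    Cen ((k %% n%:Z)%Z, z).

Section NormalMeetingTrivially.
Variable S : int * X -> Prop.
Hypothesis S_normal : normal_subloop g gi gam n S.
Hypothesis S_meet_X : forall p, (S p /\ p.1 = 0) <-> p = (0, 0).
Hypothesis S_meet_C : forall p, (S p /\ p.2 = 0) <-> p = (0, 0).

Lemma S_subloop : subloop g gi gam n S. Proof. exact: S_normal.1. Qed.

Lemma S_inQ p : S p -> Q p. Proof. by case: S_subloop => + _ _ _ _; apply. Qed.

Lemma S_in_X p : S p -> p.1 = 0 -> p = (0, 0).
Proof. by move=> Sp p1; apply/S_meet_X. Qed.

Lemma S_first_inj p q : S p -> S q -> p.1 = q.1 -> p = q.
Proof. exact: subloop_first_inj S_subloop S_in_X p q. Qed.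

Lemma S_central s : S s -> Cen s.
Proof. exact: normal_central S_normal S_first_inj s. Qed.

Lemma S_fixed s : S s -> g s.2 = s.2.
Proof.
move=> Ss; case: (central_fix (S_central Ss)) => // s1.
by rewrite (S_in_X Ss s1) /= g0.
Qed.

Lemma S_powQ s : S s -> forall i, S (powQ s.1 s.2 i).
Proof.
move=> Ss; apply: powQ_subloop S_subloop (S_fixed Ss) _.
by rewrite powQ1 -(S_inQ Ss) -surjective_pairing.
Qed.

(* Once S is known to consist of the powers of one of its elements, the
   characterization follows: the order condition is the intersection
   hypotheses read on powers. *)
Lemma S_central_cyclic k z : S (k, z) -> k = (k %% n)%Z ->
  (forall p, S p -> exists i, p = powQ k z i) -> central_cyclic S.
Proof.
move=> Sk k_red S_pow; have Spow := S_powQ Sk; rewrite /= in Spow.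
have gz_z : g z = z := S_fixed Sk.
exists k, z; split; last split; last split.
- move=> p; split=> [/S_pow [i ->] T Tsub Tk|/(_ S S_subloop)].
    by apply: powQ_subloop => //; rewrite powQ1.
  by rewrite -k_red; apply.
- by move=> p; split=> [/S_pow //|[i ->]]; apply: Spow.
- apply: is_order_common => a a_gt0; rewrite /ordC /ordX; split.
    move=> /dvdz_mod0P ka0.
    have /(congr1 snd) : powQ k z a = (0, 0).
      by apply: S_in_X (Spow a) _; rewrite /powQ /= mulrC ka0.
    by rewrite /= pmulrn.
  move=> za0; have za0' : (powQ k z a).2 = 0 by rewrite /= -pmulrn.
  have [ka0 _] := (S_meet_C (powQ k z a)).1 (conj (Spow a) za0').
  by apply/dvdz_mod0P; rewrite mulrC.
- by rewrite -k_red; apply: S_central.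
Qed.

(* Some element of S has positive first coordinate, unless S lies in 1 x X:
   when n = 0 an inverse power of an element with negative first
   coordinate has positive first coordinate. *)
Lemma S_positive p : S p -> p.1 != 0 -> exists q, S q /\ 0 < q.1.
Proof.
move=> Sp p1_neq0; have [p1_gt0|p1_lt0] : 0 < p.1 \/ p.1 < 0 by lia.
  by exists p.
have p1_red := S_inQ Sp; rewrite /inQ in p1_red.
have n0 : n = 0%N.
  case: (posnP n) => // n_gt0; have := modz_ge0 p.1 (d := n%:Z).
  by rewrite -p1_red; lia.
exists (powQ p.1 p.2 (-1)); split; first exact: S_powQ.
by rewrite /= n0 modz0; lia.
Qed.

(* Euclid's argument: an element s of S with least positive first
   coordinate o generates S, since p s^(-q) has first coordinate p.1 mod o. *)
Lemma S_least_generates o s : S s -> s.1 = o%:Z -> (0 < o)%N ->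
  (forall m, (0 < m)%N -> (m < o)%N -> ~ exists p, S p /\ p.1 = m%:Z) ->
  forall p, S p -> exists i, p = powQ o%:Z s.2 i.
Proof.
move=> Ss s1 o_gt0 o_min [p1 p2] Sp; have p1_red := S_inQ Sp; rewrite /inQ /= in p1_red.
have o_red : o%:Z = (o%:Z %% n)%Z by rewrite -s1; exact: S_inQ Ss.
have Spow := S_powQ Ss; rewrite s1 in Spow.
have [_ _ Smul _ _] := S_subloop.
set q := (p1 %/ o%:Z)%Z; set r := (p1 %% o%:Z)%Z.
have p1_eq := divz_eq p1 o%:Z; rewrite -/q -/r in p1_eq.
have r_ge0 : 0 <= r by apply: modz_ge0; lia.
have r_lt : r < o%:Z by apply: ltz_pmod; lia.
have first_rem : (mul (p1, p2) (powQ o%:Z s.2 (- q))).1 = r.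
  rewrite /= modzDmr.
  have -> : p1 + o%:Z * - q = r by rewrite {1}p1_eq; nia.
  have [n0|n_gt0] := posnP n; first by rewrite n0 modz0.
  apply: modz_small; apply/andP; split=> //.
  by have := ltz_pmod o%:Z (d := n%:Z); rewrite -o_red; lia.
have r0 : r = 0.
  apply/eqP; apply/negPn/negP => r_neq0.
  apply: (o_min `|r|%N); [lia | lia |].
  by exists (mul (p1, p2) (powQ o%:Z s.2 (- q))); split; [apply: Smul|rewrite first_rem; lia].
exists q; apply: S_first_inj => //.
by rewrite /= {1}p1_red p1_eq r0 addr0 mulrC.
Qed.

(* Either S lies in 1 x X, hence is trivial, or an element of least positive
   first coordinate generates it. *)
Lemma normal_meeting_trivially_central_cyclic : central_cyclic S.
Proof.
case: (classic (exists p, S p /\ p.1 != 0)) => [[p [Sp p1_neq0]]|noshift]; last first.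
  apply: (@S_central_cyclic 0 0); first by have [] := (S_meet_X (0, 0)).2 erefl.
    by rewrite mod0z.
  move=> p Sp; exists 0; rewrite powQ0; apply: S_in_X => //.
  by apply/eqP/negPn/negP=> p1_neq0; apply: noshift; exists p.
have [q [Sq q1_gt0]] := S_positive Sp p1_neq0.
have [o [o_gt0 [s [Ss s1]] o_min]] :=
  @least_positive_witness (fun m => exists p, S p /\ p.1 = m%:Z) `|q.1|%N
    ltac:(lia) ltac:(by exists q; split=> //; lia).
have So : S (o%:Z, s.2) by rewrite -s1 -surjective_pairing.
apply: S_central_cyclic So _ (S_least_generates Ss s1 o_gt0 o_min).
by rewrite -s1; exact: S_inQ Ss.
Qed.
End NormalMeetingTrivially.

(* Backward direction: the powers of a central (k, z) with |b^k| = |z| form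
   a normal subloop (all its elements are central) meeting both factors
   trivially (by the order condition). *)
Lemma central_cyclic_normal_meeting_trivially S :
  central_cyclic S -> normal_meeting_trivially S.
Proof.
case=> k [z [_ [S_pow [same_ord Ckz]]]].
have kernel := same_order_kernel same_ord.
have gz_z : g z = z.
  case: (central_fix Ckz) => //= kn0.
  have /kernel : (n%:Z %| k * 1)%Z by rewrite mulr1; apply/dvdz_mod0P.
  by rewrite mulr1z => ->; rewrite g0.
rewrite -powQ1 in Ckz; split; last split.
- apply: central_subloop_normal; first exact: powQ_set_subloop gz_z Ckz S_pow.
  by move=> s /S_pow [i ->]; apply: powQ_cen.
- move=> p; split=> [[/S_pow [i ->] /= ki0]|->].
    by rewrite /powQ ki0 ((kernel i).1 (introT dvdz_mod0P ki0)).
  by split=> //; apply/S_pow; exists 0; exact: (esym (powQ0 k z)).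
- move=> p; split=> [[/S_pow [i ->] /= zi0]|->].
    by rewrite /powQ zi0 (dvdz_mod0P ((kernel i).2 zi0)).
  by split=> //; apply/S_pow; exists 0; exact: (esym (powQ0 k z)).
Qed.
End ConstructionPair.

Theorem mainTheorem17 (X : zmodType) (g gi : X -> X) (gam : X -> X -> X)
  (n : nat) (S : int * X -> Prop) :
  construction_pair g gi gam -> cyclic_ok g gam n ->
  (forall p, S p -> inQ n p) -> (exists p, S p) ->
  (normal_subloop g gi gam n S /\
   (forall p, (S p /\ p.1 = 0) <-> p = (0, 0)) /\
   (forall p, (S p /\ p.2 = 0) <-> p = (0, 0)))
  <->
  (exists (k : int) (z : X),
     (forall p, S p <-> gen_subloop g gi gam n ((k %% n%:Z)%Z, z) p) /\
     (forall p, S p <-> exists i : int, p = (((k * i) %% n%:Z)%Z, z *~ i)) /\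
     (exists o : nat, is_order (ordC n k) o /\ is_order (ordX z) o) /\
     in_center g gi gam n ((k %% n%:Z)%Z, z)).
Proof.
move=> cp _ _ _; split.
  by case=> S_normal [S_meet_X S_meet_C];
    exact: normal_meeting_trivially_central_cyclic S_normal S_meet_X S_meet_C.
exact: central_cyclic_normal_meeting_trivially.
Qed.
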